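(* Let $S\ge 1$ and $N^{\min}\ge 1$ be integers, and let $Q$ be a range query over dimensions $D^Q$ with $m=|D^Q|\ge 1$. Let $T$ be a table stored as clusters, and let $T'$ be obtained from $T$ by inserting a single row into one of its clusters. Assume every cluster of $T$ and of $T'$ has at most $S$ rows, and that $N^Q(T)\ge N^{\min}$. Then $$\bigl|\mathrm{Avg}_Q(T)-\mathrm{Avg}_Q(T')\bigr|\le \max\Bigl(\frac{\Delta_R}{N^{\min}},\ \frac{1}{N^{\min}+1}\Bigr),\qquad \text{where }\Delta_R=1-\Bigl(1-\tfrac1S\Bigr)^{m}.$$
   Context: A table is a finite multiset of rows; each row assigns a value to every dimension in a finite set $D$ of dimensions, each with a totally ordered domain. The table is stored as a set of clusters (disjoint sub-multisets of rows), each containing at most $S$ rows, where $S$ is a fixed positive integer (the cluster size). A range query $Q$ is given by a nonempty set $D^Q\subseteq D$ of dimensions and, for each $d\in D^Q$, an interval $[l_d,u_d]$. A row matches $Q$ if its value on each $d\in D^Q$ lies in $[l_d,u_d]$. For a cluster $C$ and $d\in D^Q$, define $R^d(C)=|\{r\in C: l_d\le r_d\le u_d\}|/S$, and define $R(C)=\prod_{d\in D^Q}R^d(C)$. For a nonempty cluster $C$ and a dimension $d$, let $v^d_{\min}(C)$ and $v^d_{\max}(C)$ be the minimum and maximum value of $d$ among the rows of $C$. The set $C^Q(T)$ of clusters covering $Q$ consists of the clusters $C$ of $T$ such that $[v^d_{\min}(C),v^d_{\max}(C)]\cap[l_d,u_d]\neq\emptyset$ for every $d\in D^Q$. Let $N^Q(T)=|C^Q(T)|$,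 and, when $N^Q(T)\ge1$, define $$\mathrm{Avg}_Q(T)=\frac{1}{N^Q(T)}\sum_{C\in C^Q(T)}R(C).$$ *)

From HB Require Import structures.
From mathcomp Require Import all_boot all_order all_algebra.
Set Implicit Arguments. Unset Strict Implicit. Unset Printing Implicit Defensive.
Import Order.TTheory GRing.Theory Num.Theory.

Section Clusters.
Variables (D : finType) (disp : D -> Order.disp_t)
          (V : forall d : D, orderType (disp d)).

Definition trow := forall d : D, V d.
(* A cluster is a finite multiset of rows (represented by a list). *)
Definition cluster := seq trow.
(* A table stored as clusters: the list of its (pairwise disjoint) clusters. *)
Definition table := seq cluster.

Record query := Query { qdims : {set D}; qlo : trow; qhi : trow }.

(* min / max of dimension d over the nonempty cluster r0 :: rs *)
Definition vmin (r0 : trow) (rs : cluster) (d : D) : V d :=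
  \big[Order.min/r0 d]_(r <- rs) r d.
Definition vmax (r0 : trow) (rs : cluster) (d : D) : V d :=
  \big[Order.max/r0 d]_(r <- rs) r d.

(* [a,b] ∩ [c,e] ≠ ∅ in a total order, i.e. max(a,c) <= min(b,e) *)
Definition itv_meet d (a b c e : V d) : bool :=
  (Order.max a c <= Order.min b e)%O.

Definition covers (Q : query) (C : cluster) : bool :=
  match C with
  | [::] => false
  | r0 :: rs => [forall d in qdims Q,
                   itv_meet (vmin r0 rs d) (vmax r0 rs d) (qlo Q d) (qhi Q d)]
  end.

Definition NQ (Q : query) (T : table) : nat := count (covers Q) T.

Local Open Scope ring_scope.
Variable R : realFieldType.

Definition Rd (S : nat) (Q : query) (C : cluster) (d : D) : R :=
  (count (fun r : trow => (qlo Q d <= r d <= qhi Q d)%O) C)%:R / S%:R.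

Definition Rc (S : nat) (Q : query) (C : cluster) : R :=
  \prod_(d in qdims Q) Rd S Q C d.

(* Avg_Q(T) = (1/N^Q(T)) sum_{C in C^Q(T)} R(C)  (meaningful when N^Q(T) >= 1) *)
Definition AvgQ (S : nat) (Q : query) (T : table) : R :=
  (\sum_(C <- T | covers Q C) Rc S Q C) / (NQ Q T)%:R.

Definition insert_row (T : table) (i : nat) (r : trow) : table :=
  set_nth [::] T i (r :: nth [::] T i).

End Clusters.

From Pilot Require Import Defs.
From HB Require Import structures.
From mathcomp Require Import all_boot all_order all_algebra.
From mathcomp Require Import ring lra.
Set Implicit Arguments. Unset Strict Implicit. Unset Printing Implicit Defensive.
Import Order.TTheory GRing.Theory Num.Theory.
Local Open Scope ring_scope.

(* Inserting a row r into a cluster C raises each factor R^d(C) by at most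
   1/S while keeping it at most 1, so R(C) grows by at most Delta_R.  If C
   already covered Q, so does r :: C (its bounding box only grows): the
   denominator N is unchanged and the average moves by at most Delta_R / N.
   If only r :: C covers Q, a term in [0, 1] joins a sum lying in [0, N] and
   the denominator becomes N + 1, which moves the average by at most
   1 / (N + 1).  Otherwise nothing changes. *)

Section BigMinMax.
Variables (disp : Order.disp_t) (T : orderType disp) (I : Type).

Lemma big_min_idx (s : seq I) (f : I -> T) (a b : T) :
  \big[Order.min/Order.min a b]_(x <- s) f x
  = Order.min a (\big[Order.min/b]_(x <- s) f x).
Proof. by elim: s => [|c s IHs]; rewrite ?big_nil // !big_cons IHs minCA. Qed.

Lemma big_max_idx (s : seq I) (f : I -> T) (a b : T) :
  \big[Order.max/Order.max a b]_(x <- s) f x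
  = Order.max a (\big[Order.max/b]_(x <- s) f x).
Proof. by elim: s => [|c s IHs]; rewrite ?big_nil // !big_cons IHs maxCA. Qed.

End BigMinMax.

Section Covering.
Variables (D : finType) (disp : D -> Order.disp_t)
  (V : forall d : D, orderType (disp d)).

Lemma vmin_cons (r c0 : trow V) (cs : cluster V) (d : D) :
  vmin r (c0 :: cs) d = Order.min (r d) (vmin c0 cs d).
Proof.
by rewrite /vmin big_cons -!(@big_min_idx _ _ _ cs (fun x : trow V => x d)) minC.
Qed.

Lemma vmax_cons (r c0 : trow V) (cs : cluster V) (d : D) :
  vmax r (c0 :: cs) d = Order.max (r d) (vmax c0 cs d).
Proof.
by rewrite /vmax big_cons -!(@big_max_idx _ _ _ cs (fun x : trow V => x d)) maxC.
Qed.

(* Unqualified, [itv_meet] would resolve to the meet of MathComp intervals. *)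
Lemma itv_meetW (d : D) (a a' b b' c e : V d) :
  (a' <= a)%O -> (b <= b')%O -> Defs.itv_meet a b c e -> Defs.itv_meet a' b' c e.
Proof.
rewrite /Defs.itv_meet => a'a bb' meet.
apply: le_trans (le_trans meet _); [exact: le_max2 | exact: le_min2].
Qed.

Lemma covers_cons (Q : query V) (C : cluster V) (r : trow V) :
  covers Q C -> covers Q (r :: C).
Proof.
case: C => [//|c0 cs] /forall_inP meet; apply/forall_inP => d /meet.
by apply: itv_meetW; rewrite ?vmin_cons ?vmax_cons ?ge_min ?le_max lexx ?orbT.
Qed.

End Covering.

Section ProdPerturb.
Variables (R : realFieldType) (I : Type).

Lemma prod_sub_prod_le (s : seq I) (x y : I -> R) (h : R) :
  (forall i, 0 <= x i <= y i) -> (forall i, y i <= x i + h) ->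
  (forall i, x i + h <= 1) ->
  \prod_(i <- s) y i - \prod_(i <- s) x i <= 1 - (1 - h) ^+ size s.
Proof.
move=> xy yxh xh1.
have x_ge0 i : 0 <= x i by case/andP: (xy i).
have y_01 i : 0 <= y i <= 1.
  by have := yxh i; have := xh1 i; have := xy i; case/andP => *; apply/andP; split; lra.
elim: s => [|i s IHs]; first by rewrite !big_nil expr0 !subrr.
rewrite !big_cons exprS.
have Px_ge0 : 0 <= \prod_(j <- s) x j by apply: prodr_ge0.
have Px_le_Py : \prod_(j <- s) x j <= \prod_(j <- s) y j by apply: ler_prod.
have Py_le1 : \prod_(j <- s) y j <= 1 by apply: prodr_ile1.
have /andP[h_ge0 h_le1] : 0 <= h <= 1.
  by have := yxh i; have := xh1 i; have := xy i; case/andP => *; apply/andP; split; lra.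
have pow_le1 : (1 - h) ^+ size s <= 1 by apply: exprn_ile1; lra.
move: (xy i) (yxh i) (xh1 i) IHs pow_le1 Px_ge0 Px_le_Py Py_le1.
move: (x i) (y i) (\prod_(j <- s) x j) (\prod_(j <- s) y j) ((1 - h) ^+ size s).
move=> a b P P' E /andP[a_ge0 ab] bah ah1 IH E_le1 P_ge0 PP' P'_le1.
(* b P' - a P = (b - a) P' + a (P' - P) <= h P' + a (1 - E) <= h + (1 - h) (1 - E) *)
have : 0 <= (h - (b - a)) * P' by apply: mulr_ge0; lra.
have : 0 <= a * ((1 - E) - (P' - P)) by apply: mulr_ge0; lra.
have : 0 <= h * (1 - P') by apply: mulr_ge0; lra.
have : 0 <= (1 - h - a) * (1 - E) by apply: mulr_ge0; lra.
nra.
Qed.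

End ProdPerturb.

Section Averages.
Variable R : realFieldType.

Lemma dist_avg_replace (s x x' e : R) (N Nmin : nat) :
  (0 < Nmin)%N -> (Nmin <= N)%N -> `|x - x'| <= e ->
  `|(s + x) / N%:R - (s + x') / N%:R| <= e / Nmin%:R.
Proof.
move=> Nmin_gt0 NminN xx'.
have Nmin_pos : (0 : R) < Nmin%:R by rewrite ltr0n.
have N_pos : (0 : R) < N%:R by rewrite ltr0n (leq_trans Nmin_gt0).
rewrite -mulrBl [s + x]addrC addrKA normrM normfV normr_nat.
apply: le_trans (ler_wpM2r _ xx') _; first by rewrite invr_ge0 ltW.
by rewrite ler_wpM2l ?(le_trans _ xx') // lef_pV2 ?posrE // ler_nat.
Qed.

Lemma dist_avg_add (s x : R) (N Nmin : nat) :
  (0 < Nmin)%N -> (Nmin <= N)%N -> 0 <= s <= N%:R -> 0 <= x <= 1 ->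
  `|s / N%:R - (s + x) / N.+1%:R| <= Nmin.+1%:R^-1.
Proof.
move=> Nmin_gt0 NminN /andP[s_ge0 s_leN] /andP[x_ge0 x_le1].
have N_pos : (0 : R) < N%:R by rewrite ltr0n (leq_trans Nmin_gt0).
set a := s / N%:R.
have a_01 : 0 <= a <= 1 by rewrite divr_ge0 ?ler_pdivrMr ?mul1r // ltW.
(* s = N a, so the difference collapses to (a - x) / (N + 1) *)
have -> : a - (s + x) / N.+1%:R = (a - x) / N.+1%:R.
  rewrite -(divfK (lt0r_neq0 N_pos) s) -/a -addn1 natrD.
  by field; rewrite natr1 pnatr_eq0.
rewrite normrM normfV normr_nat.
apply: (@le_trans _ _ N.+1%:R^-1).
  rewrite ler_pdivrMr ?ltr0n // mulVf ?pnatr_eq0 // ler_norml.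
  by case/andP: a_01 => *; apply/andP; split; lra.
by rewrite lef_pV2 ?posrE ?ltr0n // ler_nat.
Qed.

End Averages.

Section Ratios.
Variables (R : realFieldType) (D : finType) (disp : D -> Order.disp_t)
  (V : forall d : D, orderType (disp d)) (S : nat) (Q : query V).
Hypothesis S_gt0 : (0 < S)%N.

Let S_pos : (0 : R) < S%:R. Proof. by rewrite ltr0n. Qed.

Lemma Rd_ge0 (C : cluster V) (d : D) : 0 <= Rd R S Q C d.
Proof. by rewrite divr_ge0. Qed.

Lemma Rd_le1 (C : cluster V) (d : D) : (size C <= S)%N -> Rd R S Q C d <= 1.
Proof.
by move=> sizeC; rewrite ler_pdivrMr // mul1r ler_nat (leq_trans (count_size _ _)).
Qed.

Lemma Rd_cons (C : cluster V) (r : trow V) (d : D) :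
  Rd R S Q (r :: C) d
  = Rd R S Q C d + (qlo Q d <= r d <= qhi Q d)%O%:R / S%:R.
Proof. by rewrite /Rd /= natrD mulrDl addrC. Qed.

Lemma Rc_ge0 (C : cluster V) : 0 <= Rc R S Q C.
Proof. by apply: prodr_ge0 => d _; apply: Rd_ge0. Qed.

Lemma Rc_le1 (C : cluster V) : (size C <= S)%N -> Rc R S Q C <= 1.
Proof. by move=> sizeC; apply: prodr_ile1 => d _; rewrite Rd_ge0 Rd_le1. Qed.

Lemma dist_Rc_cons (C : cluster V) (r : trow V) : (size C < S)%N ->
  `|Rc R S Q C - Rc R S Q (r :: C)| <= 1 - (1 - S%:R^-1) ^+ #|qdims Q|.
Proof.
move=> sizeC.
have Rd_le d : 0 <= Rd R S Q C d <= Rd R S Q (r :: C) d.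
  by rewrite Rd_ge0 Rd_cons lerDl divr_ge0.
have Rd_cons_le d : Rd R S Q (r :: C) d <= Rd R S Q C d + S%:R^-1.
  by rewrite Rd_cons lerD2l ler_pdivrMr // mulVf ?gt_eqF // lern1 leq_b1.
have Rd_add_le1 d : Rd R S Q C d + S%:R^-1 <= 1.
  by rewrite /Rd -[X in _ + X <= _]mul1r -mulrDl ler_pdivrMr // mul1r natr1 ler_nat
             (leq_ltn_trans (count_size _ _)).
have Rc_le : Rc R S Q C <= Rc R S Q (r :: C) by apply: ler_prod => d _.
rewrite distrC ger0_norm ?subr_ge0 // /Rc -!big_enum cardE.
exact: prod_sub_prod_le.
Qed.

Lemma sum_Rc_bounds (L : table V) : all (fun C => size C <= S)%N L ->
  0 <= \sum_(C <- L | covers Q C) Rc R S Q C <= (NQ Q L)%:R.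
Proof.
move=> sizeL; apply/andP; split; first by apply: sumr_ge0 => C _; apply: Rc_ge0.
elim: L sizeL => [|C L IHL]; first by rewrite big_nil ler0n.
case/andP => sizeC /IHL sum_le; rewrite big_cons /NQ [count _ _]/=.
case: (covers Q C); last by rewrite add0n.
by rewrite add1n -natr1 addrC lerD // Rc_le1.
Qed.

End Ratios.

Section Tables.
Variables (R : realFieldType) (D : finType) (disp : D -> Order.disp_t)
  (V : forall d : D, orderType (disp d)) (S : nat) (Q : query V).

Lemma insert_row_split (T : table V) (i : nat) (r : trow V) : (i < size T)%N ->
  exists A C B, T = A ++ C :: B /\ insert_row T i r = A ++ (r :: C) :: B.
Proof.
move=> iT; exists (take i T), (nth [::] T i), (drop i.+1 T).
by rewrite /insert_row set_nthE iT -drop_nth // cat_take_drop.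
Qed.

Lemma NQ_cons (L : table V) (C : cluster V) :
  NQ Q (C :: L) = (covers Q C + NQ Q L)%N.
Proof. by []. Qed.

Lemma NQ_cat_cons (A B : table V) (C : cluster V) :
  NQ Q (A ++ C :: B) = NQ Q (C :: A ++ B).
Proof. by rewrite /NQ /= !count_cat /= addnCA. Qed.

Lemma AvgQ_cat_cons (A B : table V) (C : cluster V) :
  AvgQ R S Q (A ++ C :: B) = AvgQ R S Q (C :: A ++ B).
Proof.
rewrite /AvgQ NQ_cat_cons big_cat !big_cons big_cat /=.
by case: (covers Q C); first rewrite addrCA.
Qed.

Lemma AvgQ_cons (L : table V) (C : cluster V) :
  AvgQ R S Q (C :: L) =
  if covers Q C then (\sum_(C0 <- L | covers Q C0) Rc R S Q C0 + Rc R S Q C)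
                       / (NQ Q L).+1%:R
  else AvgQ R S Q L.
Proof. by rewrite /AvgQ NQ_cons big_cons; case: (covers Q C); first rewrite addrC. Qed.

End Tables.

Theorem mainTheorem2 (R : realFieldType)
  (D : finType) (disp : D -> Order.disp_t) (V : forall d : D, orderType (disp d))
  (S Nmin : nat) (Q : query V) (T : table V) (i : nat) (r : trow V) :
  (1 <= S)%N -> (1 <= Nmin)%N ->
  (1 <= #|qdims Q|)%N ->
  (i < size T)%N ->
  all (fun C => size C <= S)%N T ->
  all (fun C => size C <= S)%N (insert_row T i r) ->
  (Nmin <= NQ Q T)%N ->
  `|AvgQ R S Q T - AvgQ R S Q (insert_row T i r)|
    <= Num.max ((1 - (1 - S%:R^-1) ^+ #|qdims Q|) / Nmin%:R)
               (Nmin.+1%:R)^-1.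
Proof.
move=> S_gt0 Nmin_gt0 _ /(insert_row_split r) [A [C [B [-> ->]]]].
rewrite NQ_cat_cons !AvgQ_cat_cons !AvgQ_cons !all_cat NQ_cons.
move=> /andP[sizeA /andP[_ sizeB]] /andP[_ /andP[sizeC _]].
have sizeAB : all (fun C => size C <= S)%N (A ++ B) by rewrite all_cat sizeA.
have sum_bounds := sum_Rc_bounds R Q S_gt0 sizeAB.
case coverC: (covers Q C).
  rewrite (covers_cons r coverC) add1n => Nmin_le.
  by rewrite le_max dist_avg_replace // dist_Rc_cons.
case coverC': (covers Q (r :: C)); rewrite add0n => Nmin_le.
  by rewrite le_max dist_avg_add ?orbT // Rc_ge0 Rc_le1.
by rewrite subrr normr0 le_max invr_ge0 ler0n orbT.
Qed.
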